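(* For any smooth complex-valued potential $V$, the number $k_2:=\dim\big(\mathfrak g^{\mathrm{ess}}_V\cap\langle G(\chi),\sigma M,\rho I\rangle\big)-2$ belongs to $\{0,2\}$, where the span is over all smooth real functions $\chi,\sigma,\rho$ of $t$.
   Context: $\mathfrak g_V$ is the maximal Lie invariance algebra of $i\psi_t+\psi_{xx}+V(t,x)\psi=0$ ($\psi$ complex of real $t,x$; vector fields on $(t,x,\psi,\psi^* )$, $\psi^*$ an additional dependent variable), considered locally. With $M=i\psi\partial_\psi-i\psi^*\partial_{\psi^*}$, $I=\psi\partial_\psi+\psi^*\partial_{\psi^*}$, $D(\tau)=\tau\partial_t+\frac12\tau_tx\partial_x+\frac18\tau_{tt}x^2M$, $G(\chi)=\chi\partial_x+\frac12\chi_txM$, set $\mathfrak g^{\mathrm{ess}}_V:=\mathfrak g_V\cap\langle D(\tau),G(\chi),\sigma(t)M,\rho(t)I\rangle$ (span over all smooth real $\tau,\chi,\sigma,\rho$ of $t$); $\sigma M$, $\rho I$ mean $\sigma(t)M$, $\rho(t)I$. *)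

From Stdlib Require Import Reals List.
Import ListNotations.
From Coquelicot Require Import Coquelicot.
Open Scope R_scope.

Definition dt (f : R -> R -> R) : R -> R -> R :=
  fun t x => Derive (fun s => f s x) t.
Definition dx (f : R -> R -> R) : R -> R -> R :=
  fun t x => Derive (fun y => f t y) x.

(** iterated partial derivative along a word of directions (true = t, false = x) *)
Fixpoint pd (l : list bool) (f : R -> R -> R) : R -> R -> R :=
  match l with
  | nil => f
  | true :: l' => dt (pd l' f)
  | false :: l' => dx (pd l' f)
  end.

Definition smooth2 (f : R -> R -> R) : Prop :=
  forall l : list bool,
    (forall t x, ex_derive (fun s => pd l f s x) t /\ ex_derive (fun y => pd l f t y) x) /\
    (forall t x, continuous (fun p : R * R => pd l f (fst p) (snd p)) (t, x)).

Definition smooth1 (g : R -> R) : Prop := forall (n : nat) (t : R), ex_derive (Derive_n g n) t.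

(** * Vector fields on (t, x, psi), written in real coordinates psi = u + i v.
    In the paper's notation (psi, psi^* ), eta^psi = c_u + i c_v, eta^{psi^* } = c_u - i c_v. *)
Record VF := mkVF {
  c_t : R -> R -> R -> R -> R;
  c_x : R -> R -> R -> R -> R;
  c_u : R -> R -> R -> R -> R;
  c_v : R -> R -> R -> R -> R }.

Definition vf0 : VF :=
  mkVF (fun _ _ _ _ => 0) (fun _ _ _ _ => 0) (fun _ _ _ _ => 0) (fun _ _ _ _ => 0).

Definition vf_add (P Q : VF) : VF :=
  mkVF (fun t x u v => c_t P t x u v + c_t Q t x u v)
       (fun t x u v => c_x P t x u v + c_x Q t x u v)
       (fun t x u v => c_u P t x u v + c_u Q t x u v)
       (fun t x u v => c_v P t x u v + c_v Q t x u v).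

Definition vf_fmul (f : R -> R -> R) (Q : VF) : VF :=
  mkVF (fun t x u v => f t x * c_t Q t x u v)
       (fun t x u v => f t x * c_x Q t x u v)
       (fun t x u v => f t x * c_u Q t x u v)
       (fun t x u v => f t x * c_v Q t x u v).

Definition vf_scal (c : R) (Q : VF) : VF := vf_fmul (fun _ _ => c) Q.

Definition d_t : VF := mkVF (fun _ _ _ _ => 1) (fun _ _ _ _ => 0) (fun _ _ _ _ => 0) (fun _ _ _ _ => 0).
Definition d_x : VF := mkVF (fun _ _ _ _ => 0) (fun _ _ _ _ => 1) (fun _ _ _ _ => 0) (fun _ _ _ _ => 0).

(** M = i psi d_psi - i psi^* d_psi^*  =  -v d_u + u d_v *)
Definition Mvf : VF := mkVF (fun _ _ _ _ => 0) (fun _ _ _ _ => 0) (fun _ _ u v => - v) (fun _ _ u v => u).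
(** I = psi d_psi + psi^* d_psi^*  =  u d_u + v d_v *)
Definition Ivf : VF := mkVF (fun _ _ _ _ => 0) (fun _ _ _ _ => 0) (fun _ _ u v => u) (fun _ _ u v => v).

Definition Dop (tau : R -> R) : VF :=
  vf_add (vf_fmul (fun t _ => tau t) d_t)
    (vf_add (vf_fmul (fun t x => / 2 * Derive tau t * x) d_x)
            (vf_fmul (fun t x => / 8 * Derive_n tau 2 t * x ^ 2) Mvf)).

Definition Gop (chi : R -> R) : VF :=
  vf_add (vf_fmul (fun t _ => chi t) d_x)
         (vf_fmul (fun t x => / 2 * Derive chi t * x) Mvf).

Definition sigM (sigma : R -> R) : VF := vf_fmul (fun t _ => sigma t) Mvf.
Definition rhoI (rho : R -> R) : VF := vf_fmul (fun t _ => rho t) Ivf.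

(** * Lie symmetries of  i psi_t + psi_xx + V psi = 0,  V = a + i b, psi = u + i v, i.e.
      Delta1 = -v_t + u_xx + a u - b v = 0,   Delta2 = u_t + v_xx + a v + b u = 0.
    Infinitesimal invariance criterion: pr^(2) Q (Delta) = 0 on Delta = 0.
    Every 2-jet is the 2-jet of a smooth (polynomial) function at a point, so we
    range over smooth (U, W) and points (t, x).  The prolongation coefficients are
    phi^J = D_J (eta - tau u_t - xi u_x) + tau u_{J,t} + xi u_{J,x}. *)
Definition is_Lie_symmetry (V : R -> R -> C) (Q : VF) : Prop :=
  forall U W : R -> R -> R, smooth2 U -> smooth2 W ->
  let a := fun t x => Re (V t x) in
  let b := fun t x => Im (V t x) in
  let ev := fun (f : R -> R -> R -> R -> R) t x => f t x (U t x) (W t x) in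
  let tau := ev (c_t Q) in
  let xi := ev (c_x Q) in
  let hu := ev (c_u Q) in
  let hv := ev (c_v Q) in
  let phu := fun t x => hu t x - tau t x * dt U t x - xi t x * dx U t x in
  let phv := fun t x => hv t x - tau t x * dt W t x - xi t x * dx W t x in
  let phu_t := fun t x => dt phu t x + tau t x * dt (dt U) t x + xi t x * dx (dt U) t x in
  let phv_t := fun t x => dt phv t x + tau t x * dt (dt W) t x + xi t x * dx (dt W) t x in
  let phu_xx := fun t x =>
     dx (dx phu) t x + tau t x * dx (dx (dt U)) t x + xi t x * dx (dx (dx U)) t x in
  let phv_xx := fun t x =>
     dx (dx phv) t x + tau t x * dx (dx (dt W)) t x + xi t x * dx (dx (dx W)) t x in
  forall t x : R,
    - dt W t x + dx (dx U) t x + a t x * U t x - b t x * W t x = 0 ->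
    dt U t x + dx (dx W) t x + a t x * W t x + b t x * U t x = 0 ->
    tau t x * (dt a t x * U t x - dt b t x * W t x)
      + xi t x * (dx a t x * U t x - dx b t x * W t x)
      + a t x * hu t x - b t x * hv t x
      - phv_t t x + phu_xx t x = 0 /\
    tau t x * (dt a t x * W t x + dt b t x * U t x)
      + xi t x * (dx a t x * W t x + dx b t x * U t x)
      + a t x * hv t x + b t x * hu t x
      + phu_t t x + phv_xx t x = 0.

Definition gV (V : R -> R -> C) (Q : VF) : Prop := is_Lie_symmetry V Q.

Definition in_ess_span (Q : VF) : Prop :=
  exists tau chi sigma rho : R -> R,
    smooth1 tau /\ smooth1 chi /\ smooth1 sigma /\ smooth1 rho /\
    Q = vf_add (Dop tau) (vf_add (Gop chi) (vf_add (sigM sigma) (rhoI rho))).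

Definition in_GMI_span (Q : VF) : Prop :=
  exists chi sigma rho : R -> R,
    smooth1 chi /\ smooth1 sigma /\ smooth1 rho /\
    Q = vf_add (Gop chi) (vf_add (sigM sigma) (rhoI rho)).

Definition gV_ess (V : R -> R -> C) (Q : VF) : Prop := gV V Q /\ in_ess_span Q.

Fixpoint lincomb (c : nat -> R) (b : nat -> VF) (n : nat) : VF :=
  match n with
  | O => vf0
  | S k => vf_add (lincomb c b k) (vf_scal (c k) (b k))
  end.

Definition has_dim (P : VF -> Prop) (n : nat) : Prop :=
  exists b : nat -> VF,
    (forall i, (i < n)%nat -> P (b i)) /\
    (forall c : nat -> R, lincomb c b n = vf0 -> forall i, (i < n)%nat -> c i = 0) /\
    (forall Q, P Q -> exists c : nat -> R, Q = lincomb c b n).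

(* For Q = G(chi) + sigma M + rho I, eliminating u_t and v_t with the equation turns the
   invariance criterion into the determining equations chi V_x = chi''/2 x + sigma' - i rho'.
   Taken at x = 0 and x = 1 they give the linear equation chi'' = q chi with
   q = 2 (Re V_x (t,1) - Re V_x (t,0)) and fix sigma', rho' in terms of chi.  If
   V = gamma2 x^2 + gamma1 x + gamma0 with gamma2 real, every solution chi is admissible, so
   the chi form a plane and the dimension is 4.  Otherwise chi vanishes on an open set, hence
   to first order at a point, hence everywhere by uniqueness, and only M and I remain.
   Existence for the linear equation comes from Picard iteration, uniqueness from a Gronwall
   estimate on chi^2 + chi'^2. *)

From Stdlib Require Import Reals Lra Lia Psatz Classical FunctionalExtensionality List.
From Coquelicot Require Import Coquelicot.
Open Scope R_scope.

(** * Smooth functions of one variable *)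

(** Off by one: [derivable_upto n f] says that [f, f', ..., f^(n)] are differentiable. *)
Fixpoint derivable_upto (n : nat) (f : R -> R) : Prop :=
  (forall t, ex_derive f t) /\
  match n with O => True | S n => derivable_upto n (Derive f) end.

Lemma derivable_upto_ex_derive n f t : derivable_upto n f -> ex_derive f t.
Proof. destruct n; intros [Hf _]; apply Hf. Qed.

Lemma derivable_upto_ext n f g :
  (forall t, f t = g t) -> derivable_upto n f -> derivable_upto n g.
Proof.
  revert f g; induction n as [|n IH]; intros f g Efg [Hf Hn]; split.
  - intros t; apply (ex_derive_ext f); auto.
  - exact I.
  - intros t; apply (ex_derive_ext f); auto.
  - apply (IH (Derive f)); [intros t; apply Derive_ext; auto | exact Hn].
Qed.

Lemma derivable_upto_const n c : derivable_upto n (fun _ => c).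
Proof.
  revert c; induction n as [|n IH]; intros c; split; try (intros t; apply ex_derive_const).
  - exact I.
  - apply (derivable_upto_ext n (fun _ => 0)); [intros t; symmetry; apply Derive_const | apply IH].
Qed.

Lemma derivable_upto_plus n f g :
  derivable_upto n f -> derivable_upto n g -> derivable_upto n (fun t => f t + g t).
Proof.
  revert f g; induction n as [|n IH]; intros f g [Hf Hf'] [Hg Hg']; split;
    try (intros t; apply (ex_derive_plus f g); auto).
  - exact I.
  - apply (derivable_upto_ext n (fun t => Derive f t + Derive g t)).
    + intros t; symmetry; apply Derive_plus; auto.
    + apply IH; assumption.
Qed.

Lemma derivable_upto_pred n f : derivable_upto (S n) f -> derivable_upto n f.
Proof.
  revert f; induction n as [|n IH]; intros f [Hf Hn]; split; auto.
Qed.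

Lemma derivable_upto_mult n f g :
  derivable_upto n f -> derivable_upto n g -> derivable_upto n (fun t => f t * g t).
Proof.
  revert f g; induction n as [|n IH]; intros f g Hf Hg; split;
    try (intros t; apply ex_derive_mult; eapply derivable_upto_ex_derive; eassumption).
  - exact I.
  - apply (derivable_upto_ext n (fun t => Derive f t * g t + f t * Derive g t)).
    + intros t; symmetry; apply Derive_mult; eapply derivable_upto_ex_derive; eassumption.
    + apply derivable_upto_plus; apply IH;
        solve [apply derivable_upto_pred; assumption | apply Hf | apply Hg].
Qed.

Lemma Derive_n_Derive f n t : Derive_n (Derive f) n t = Derive_n f (S n) t.
Proof. rewrite <- Nat.add_1_r. apply (Derive_n_comp f n 1). Qed.

Lemma smooth1_Derive f : smooth1 f -> smooth1 (Derive f).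
Proof.
  intros Hf n t. apply (ex_derive_ext (Derive_n f (S n))).
  - intros s; symmetry; apply Derive_n_Derive.
  - apply Hf.
Qed.

Lemma smooth1_ex_derive f t : smooth1 f -> ex_derive f t.
Proof. intros Hf; exact (Hf O t). Qed.

Lemma smooth1_derivable_upto f : smooth1 f <-> forall n, derivable_upto n f.
Proof.
  split.
  - intros Hf n; revert f Hf; induction n as [|n IH]; intros f Hf; split;
      try (intros t; apply smooth1_ex_derive, Hf).
    + exact I.
    + apply IH, smooth1_Derive, Hf.
  - intros Hf n; revert f Hf; induction n as [|n IH]; intros f Hf t.
    + exact (derivable_upto_ex_derive O f t (Hf O)).
    + apply (ex_derive_ext (Derive_n (Derive f) n)).
      * intros s; apply Derive_n_Derive.
      * apply IH; intros m; apply (Hf (S m)).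
Qed.

Lemma smooth1_of_Derive f :
  (forall t, ex_derive f t) -> smooth1 (Derive f) -> smooth1 f.
Proof.
  rewrite !smooth1_derivable_upto; intros Hf HDf [|n]; split; auto; exact I.
Qed.

Lemma smooth1_ext f g : (forall t, f t = g t) -> smooth1 f -> smooth1 g.
Proof.
  rewrite !smooth1_derivable_upto; intros E Hf n; exact (derivable_upto_ext n f g E (Hf n)).
Qed.

Lemma smooth1_const c : smooth1 (fun _ => c).
Proof. apply smooth1_derivable_upto; intros n; apply derivable_upto_const. Qed.

Lemma smooth1_plus f g : smooth1 f -> smooth1 g -> smooth1 (fun t => f t + g t).
Proof. rewrite !smooth1_derivable_upto; intros; apply derivable_upto_plus; auto. Qed.

Lemma smooth1_mult f g : smooth1 f -> smooth1 g -> smooth1 (fun t => f t * g t).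
Proof. rewrite !smooth1_derivable_upto; intros; apply derivable_upto_mult; auto. Qed.

Lemma smooth1_scal c f : smooth1 f -> smooth1 (fun t => c * f t).
Proof. intros; apply smooth1_mult; auto using smooth1_const. Qed.

Lemma smooth1_minus f g : smooth1 f -> smooth1 g -> smooth1 (fun t => f t - g t).
Proof.
  intros Hf Hg. apply (smooth1_ext (fun t => f t + (-1) * g t)); [intros; ring|].
  apply smooth1_plus, smooth1_scal; assumption.
Qed.

Lemma smooth1_continuous f t : smooth1 f -> continuous f t.
Proof.
  intros Hf. apply (ex_derive_continuous (K := R_AbsRing) (V := R_NormedModule)).
  apply smooth1_ex_derive, Hf.
Qed.

Lemma is_derive_RInt_continuous (f : R -> R) a t :
  (forall s, continuous f s) -> is_derive (fun u => RInt f a u) t (f t).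
Proof.
  intros Hf. apply (is_derive_RInt f (fun u => RInt f a u) a t); [|apply Hf].
  apply filter_forall; intros u.
  apply (RInt_correct (V := R_CompleteNormedModule)).
  apply (ex_RInt_continuous (V := R_CompleteNormedModule)); auto.
Qed.

Lemma smooth1_RInt f a : smooth1 f -> smooth1 (fun u => RInt f a u).
Proof.
  intros Hf. assert (Hc : forall s, continuous f s) by (intros; apply smooth1_continuous, Hf).
  apply smooth1_of_Derive.
  - intros t; eexists; apply is_derive_RInt_continuous, Hc.
  - apply (smooth1_ext f); [|exact Hf].
    intros t; symmetry; apply is_derive_unique, is_derive_RInt_continuous, Hc.
Qed.

Lemma smooth1_of_linear_ode (q y z : R -> R) : smooth1 q ->
  (forall t, is_derive y t (z t)) -> (forall t, is_derive z t (q t * y t)) -> smooth1 y.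
Proof.
  rewrite !smooth1_derivable_upto; intros Hq Hy Hz.
  assert (Hy' : forall t, ex_derive y t) by (intros t; exists (z t); apply Hy).
  assert (Hz' : forall t, ex_derive z t) by (intros t; exists (q t * y t); apply Hz).
  assert (H : forall n, derivable_upto n y /\ derivable_upto n z).
  { induction n as [|n [IHy IHz]]; (split; split; [assumption | | assumption |]); try exact I.
    - apply (derivable_upto_ext n z); [|exact IHz].
      intros t; symmetry; apply is_derive_unique, Hy.
    - apply (derivable_upto_ext n (fun t => q t * y t)); [|apply derivable_upto_mult; auto].
      intros t; symmetry; apply is_derive_unique, Hz. }
  intros n; apply H.
Qed.

(** * The linear equation y'' = q y *)

Lemma MVT_segment (f df : R -> R) a b : a <= b ->
  (forall s, a <= s <= b -> is_derive f s (df s)) ->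
  exists c, a <= c <= b /\ f b - f a = df c * (b - a).
Proof.
  intros Hab Hf. destruct (Req_dec a b) as [<-|Hne].
  - exists a; split; [lra | ring].
  - destruct (MVT_cor3 f df a b) as [c [Hac [Hcb Hc]]]; [lra | |].
    + intros s Has Hsb; apply is_derive_Reals, Hf; lra.
    + exists c; split; [lra | rewrite Hc; ring].
Qed.

Lemma bounded_on_segment (q : R -> R) a b : (forall t, continuous q t) ->
  exists M, 0 <= M /\ forall s, a <= s <= b -> Rabs (q s) <= M.
Proof.
  intros Hq. destruct (Rle_dec a b) as [Hab|Hab].
  - destruct (continuity_ab_maj (fun s => Rabs (q s)) a b Hab) as [m [Hm _]].
    + intros c _; apply continuity_pt_filterlim, (continuous_Rabs_comp q c (Hq c)).
    + exists (Rabs (q m)); split; [apply Rabs_pos | exact Hm].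
  - exists 0; split; [lra | intros s Hs; lra].
Qed.

Lemma is_derive_exp_weight (E : R -> R) (dE L s : R) : is_derive E s dE ->
  is_derive (fun u => E u * exp (L * u)) s ((dE + L * E s) * exp (L * s)).
Proof.
  intros HE. replace ((dE + L * E s) * exp (L * s))
    with (dE * exp (L * s) + E s * (L * exp (L * s))) by ring.
  apply (Derive.is_derive_mult E (fun u => exp (L * u))); [exact HE |].
  auto_derive; [trivial | ring].
Qed.

(** [exp (-L s) E s] decreases to the right of [t1] and [exp (L s) E s] increases to its left. *)
Lemma Gronwall_zero (E dE : R -> R) (L t1 t : R) :
  (forall s, is_derive E s (dE s)) ->
  (forall s, Rmin t t1 <= s <= Rmax t t1 -> Rabs (dE s) <= L * E s) ->
  E t1 = 0 -> E t <= 0.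
Proof.
  intros HE Hb HE1. destruct (Rle_dec t1 t) as [Ht|Ht].
  - destruct (MVT_segment (fun u => E u * exp (- L * u))
      (fun u => (dE u + - L * E u) * exp (- L * u)) t1 t Ht) as [c [Hc Hmvt]].
    { intros s _; apply is_derive_exp_weight, HE. }
    assert (Hdc : dE c <= L * E c).
    { apply Rle_trans with (Rabs (dE c)); [apply Rle_abs | apply Hb].
      rewrite Rmin_right, Rmax_left; lra. }
    pose proof (exp_pos (- L * c)); pose proof (exp_pos (- L * t)).
    assert (0 <= - (dE c + - L * E c) * exp (- L * c)) by (apply Rmult_le_pos; lra).
    assert (E t * exp (- L * t) <= 0) by (rewrite HE1 in Hmvt; nra).
    nra.
  - destruct (MVT_segment (fun u => E u * exp (L * u))
      (fun u => (dE u + L * E u) * exp (L * u)) t t1 ltac:(lra)) as [c [Hc Hmvt]].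
    { intros s _; apply is_derive_exp_weight, HE. }
    assert (Hdc : - (L * E c) <= dE c).
    { assert (Hb' : Rabs (dE c) <= L * E c) by (apply Hb; rewrite Rmin_left, Rmax_right; lra).
      apply Rabs_le_between in Hb'; lra. }
    pose proof (exp_pos (L * c)); pose proof (exp_pos (L * t)).
    assert (0 <= (dE c + L * E c) * exp (L * c)) by (apply Rmult_le_pos; lra).
    assert (E t * exp (L * t) <= 0) by (rewrite HE1 in Hmvt; nra).
    nra.
Qed.

(** The left-hand side is stated in the form produced by differentiating [w^2 + w'^2]
    along [w'' = q w]. *)
Lemma energy_derivative_bound w p q :
  Rabs ((p * w + w * p) + (q * w * p + p * (q * w))) <= (1 + Rabs q) * (w * w + p * p).
Proof.
  replace ((p * w + w * p) + (q * w * p + p * (q * w))) with ((1 + q) * (2 * w * p)) by ring.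
  rewrite Rabs_mult. apply Rmult_le_compat; try apply Rabs_pos.
  - apply Rle_trans with (Rabs 1 + Rabs q); [apply Rabs_triang | rewrite Rabs_R1; lra].
  - pose proof (Rle_0_sqr (w - p)); pose proof (Rle_0_sqr (w + p)); unfold Rsqr in *.
    apply Rabs_le; split; nra.
Qed.

(** The energy [w^2 + w'^2] satisfies [|E'| <= (1 + M) E]. *)
Lemma linear_ode_unique (q w p : R -> R) t1 : (forall t, continuous q t) ->
  (forall t, is_derive w t (p t)) -> (forall t, is_derive p t (q t * w t)) ->
  w t1 = 0 -> p t1 = 0 -> forall t, w t = 0.
Proof.
  intros Hq Hw Hp Hw1 Hp1 t.
  destruct (bounded_on_segment q (Rmin t t1) (Rmax t t1) Hq) as [M [HM HqM]].
  assert (HE : w t * w t + p t * p t <= 0).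
  { apply (Gronwall_zero (fun s => w s * w s + p s * p s)
      (fun s => (p s * w s + w s * p s) + (q s * w s * p s + p s * (q s * w s))) (1 + M) t1 t).
    - intros s; apply (is_derive_plus (fun s => w s * w s)); apply Derive.is_derive_mult; auto.
    - intros s Hs. eapply Rle_trans; [apply energy_derivative_bound |].
      apply Rmult_le_compat_r; [nra | specialize (HqM s Hs); lra].
    - rewrite Hw1, Hp1; ring. }
  nra.
Qed.

Lemma const_of_derive_zero (f : R -> R) : (forall t, is_derive f t 0) -> forall t, f t = f 0.
Proof.
  intros Hf t. destruct (Rle_dec 0 t) as [Ht|Ht].
  - destruct (MVT_segment f (fun _ => 0) 0 t Ht) as [c [_ E]]; [intros; apply Hf | lra].
  - destruct (MVT_segment f (fun _ => 0) t 0 ltac:(lra)) as [c [_ E]]; [intros; apply Hf | lra].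
Qed.

Lemma is_derive_pow_primitive (K : R) n s :
  is_derive (fun u => K * u ^ S n / INR (S n)) s (K * s ^ n).
Proof.
  assert (HSn : INR (S n) <> 0) by (apply not_0_INR; lia).
  auto_derive; [trivial|].
  change (match n with 0%nat => 1 | S _ => INR n + 1 end) with (INR (S n)).
  field; exact HSn.
Qed.

Lemma abs_le_pow_of_derive_nonneg (g h : R -> R) (K : R) n t : 0 <= t ->
  g 0 = 0 -> (forall s, 0 <= s <= t -> is_derive g s (h s)) ->
  (forall s, 0 <= s <= t -> Rabs (h s) <= K * s ^ n) ->
  Rabs (g t) <= K * t ^ S n / INR (S n).
Proof.
  intros Ht Hg0 Hg Hh. set (P := fun u => K * u ^ S n / INR (S n)).
  (* [P - g] and [P + g] are nondecreasing on [[0, t]]. *)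
  assert (HP0 : P 0 = 0) by (unfold P, Rdiv; rewrite pow_i by lia; ring).
  destruct (MVT_segment (fun u => P u - g u) (fun u => K * u ^ n - h u) 0 t Ht)
    as [c [Hc E1]].
  { intros s Hs; apply (is_derive_minus P g); [apply is_derive_pow_primitive | auto]. }
  destruct (MVT_segment (fun u => P u + g u) (fun u => K * u ^ n + h u) 0 t Ht)
    as [d [Hd E2]].
  { intros s Hs; apply (is_derive_plus P g); [apply is_derive_pow_primitive | auto]. }
  assert (Hhc := Hh c Hc); assert (Hhd := Hh d Hd).
  apply Rabs_le_between in Hhc, Hhd.
  fold (P t). rewrite HP0, Hg0 in E1, E2. apply Rabs_le. split; nra.
Qed.

Lemma abs_le_pow_of_derive (g h : R -> R) (K : R) n t :
  g 0 = 0 -> (forall s, is_derive g s (h s)) ->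
  (forall s, Rabs s <= Rabs t -> Rabs (h s) <= K * Rabs s ^ n) ->
  Rabs (g t) <= K * Rabs t ^ S n / INR (S n).
Proof.
  intros Hg0 Hg Hh. destruct (Rle_dec 0 t) as [Ht|Ht].
  - rewrite (Rabs_pos_eq t Ht). apply (abs_le_pow_of_derive_nonneg g h); auto.
    intros s Hs. replace (s ^ n) with (Rabs s ^ n) by (rewrite Rabs_pos_eq by lra; reflexivity).
    apply Hh.
    rewrite !Rabs_pos_eq; lra.
  - (* reflect: [u |-> g (- u)] on [[0, - t]] *)
    rewrite (Rabs_left t) by lra. replace (g t) with (g (- - t)) by (f_equal; ring).
    apply (abs_le_pow_of_derive_nonneg (fun u => g (- u)) (fun u => - h (- u))); [lra | | |].
    + rewrite Ropp_0; exact Hg0.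
    + intros s _. replace (- h (- s)) with (scal (-1) (h (- s)))
        by (unfold scal; simpl; unfold mult; simpl; ring).
      apply (is_derive_comp g (fun u => - u)); [apply Hg | auto_derive; [trivial | ring]].
    + intros s Hs. rewrite Rabs_Ropp.
      replace (s ^ n) with (Rabs (- s) ^ n) by (rewrite Rabs_Ropp, Rabs_pos_eq by lra; reflexivity).
      apply Hh. rewrite Rabs_Ropp, Rabs_pos_eq, Rabs_left; lra.
Qed.

Lemma SP_increments (f : nat -> R -> R) n y :
  SP (fun k y => f (S k) y - f k y) n y = f (S n) y - f O y.
Proof. unfold SP; induction n as [|n IH]; simpl; [| rewrite IH]; ring. Qed.

Definition increments_limit (f : nat -> R -> R) y := f O y + Series (fun k => f (S k) y - f k y).

(** Weierstrass M-test ([CVN_CVU]) for the telescoping series of increments. *)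
Lemma CVU_of_summable_increments (f : nat -> R -> R) :
  (forall r : posreal, exists a : nat -> R, ex_series a /\
     forall n y, Boule 0 r y -> Rabs (f (S n) y - f n y) <= a n) ->
  forall r : posreal, CVU f (increments_limit f) 0 r.
Proof.
  intros Ha r. set (fn := fun k y => f (S k) y - f k y).
  assert (Hser : forall y, is_series (fun k => fn k y) (Series (fun k => fn k y))).
  { intros y. apply Series_correct.
    assert (Hr : 0 < Rabs y + 1) by (pose proof (Rabs_pos y); lra).
    destruct (Ha (mkposreal _ Hr)) as [a [Hsa Hb]].
    apply (ex_series_le (V := R_CompleteNormedModule) _ a); [intros k; apply Hb | exact Hsa].
    unfold Boule; simpl; rewrite Rminus_0_r; lra. }
  assert (cv : forall y, {l | Un_cv (fun N => SP fn N y) l}).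
  { intros y; exists (Series (fun k => fn k y)). exact (proj1 (is_series_Reals _ _) (Hser y)). }
  assert (Hcvu : CVU (SP fn) (SFL fn cv) 0 r).
  { destruct (Ha r) as [a [Hsa Hb]]. apply CVN_CVU.
    assert (Hpos : forall k, 0 <= a k).
    { intros k; apply Rle_trans with (Rabs (fn k 0)); [apply Rabs_pos | apply Hb].
      unfold Boule; rewrite Rminus_0_r, Rabs_R0; apply cond_pos. }
    exists a, (Series a). split; [| exact Hb].
    apply is_series_Reals, (is_series_ext a); [| apply Series_correct, Hsa].
    intros k; rewrite Rabs_pos_eq; auto. }
  intros eps Heps. destruct (Hcvu eps Heps) as [N HN]. exists (S N).
  intros [|n] y Hn Hy; [lia|]. specialize (HN n y ltac:(lia) Hy).
  unfold SFL in HN. destruct (cv y) as [l Hl].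
  rewrite (UL_sequence _ _ _ Hl (proj1 (is_series_Reals _ _) (Hser y))) in HN.
  rewrite (SP_increments f n y : SP fn n y = _) in HN.
  replace (increments_limit f y - f (S n) y)
    with (Series (fun k => fn k y) - (f (S n) y - f O y)) by (unfold increments_limit, fn; ring).
  exact HN.
Qed.

Lemma CVU_shift (f : nat -> R -> R) g c r : CVU f g c r -> CVU (fun n => f (S n)) g c r.
Proof.
  intros Hf eps Heps. destruct (Hf eps Heps) as [N HN].
  exists N; intros n y Hn Hy; apply HN; [lia | exact Hy].
Qed.

Lemma CVU_mult_bounded (f : nat -> R -> R) (g h : R -> R) M c r :
  CVU f g c r -> (forall y, Boule c r y -> Rabs (h y) <= M) ->
  CVU (fun n y => h y * f n y) (fun y => h y * g y) c r.
Proof.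
  intros Hf Hh eps Heps. set (K := Rabs M + 1).
  assert (HK : 0 < K) by (unfold K; pose proof (Rabs_pos M); lra).
  destruct (Hf (eps / K)) as [N HN]; [apply Rdiv_lt_0_compat; lra |].
  exists N; intros n y Hn Hy.
  replace (h y * g y - h y * f n y) with (h y * (g y - f n y)) by ring.
  rewrite Rabs_mult.
  assert (Hhy : Rabs (h y) <= K) by (specialize (Hh y Hy); unfold K; pose proof (Rle_abs M); lra).
  specialize (HN n y Hn Hy).
  apply Rle_lt_trans with (K * Rabs (g y - f n y)).
  - apply Rmult_le_compat_r; [apply Rabs_pos | exact Hhy].
  - replace eps with (K * (eps / K)) by (field; lra). apply Rmult_lt_compat_l; lra.
Qed.

Lemma CVU_lim_eventually_const (f : nat -> R -> R) g r x c :
  CVU f g 0 r -> Boule 0 r x -> (forall n, f (S n) x = c) -> g x = c.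
Proof.
  intros Hf Hx Hc. apply (UL_sequence (fun n => f (S n) x)).
  - apply (CVU_cv (fun n => f (S n)) g 0 r); [apply CVU_shift, Hf | exact Hx].
  - intros eps Heps; exists O; intros n _. rewrite Hc; unfold R_dist.
    rewrite Rminus_diag, Rabs_R0; exact Heps.
Qed.

Lemma is_derive_const_plus_RInt (f : R -> R) c t : (forall s, continuous f s) ->
  is_derive (fun u => c + RInt f 0 u) t (f t).
Proof.
  intros Hf. replace (f t) with (0 + f t) by ring.
  apply (is_derive_plus (fun _ => c)); [| apply is_derive_RInt_continuous, Hf].
  apply (is_derive_const (K := R_AbsRing) (V := R_NormedModule)).
Qed.

Lemma continuous_mult_R (f g : R -> R) t :
  continuous f t -> continuous g t -> continuous (fun s => f s * g s) t.
Proof. apply (continuous_mult (U := R_UniformSpace) (K := R_AbsRing)). Qed.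

Section Picard.

Variable q : R -> R.
Hypothesis q_cont : forall t, continuous q t.
Variables c0 c1 : R.

(** Started from [0], so that the first increment is the constant [(c0, c1)] and all later
    ones vanish at [0]. *)
Fixpoint picard (n : nat) : (R -> R) * (R -> R) :=
  match n with
  | O => (fun _ => 0, fun _ => 0)
  | S n => let yz := picard n in
      (fun t => c0 + RInt (snd yz) 0 t, fun t => c1 + RInt (fun s => q s * fst yz s) 0 t)
  end.

Definition picard_y n := fst (picard n).
Definition picard_z n := snd (picard n).

Lemma picard_derive_of_continuous n :
  (forall t, continuous (picard_y n) t /\ continuous (picard_z n) t) ->
  forall t, is_derive (picard_y (S n)) t (picard_z n t) /\
            is_derive (picard_z (S n)) t (q t * picard_y n t).
Proof.
  intros Hc t. split.
  - apply (is_derive_const_plus_RInt (picard_z n)); intros s; apply Hc.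
  - apply (is_derive_const_plus_RInt (fun s => q s * picard_y n s)).
    intros s; apply continuous_mult_R; [apply q_cont | apply Hc].
Qed.

Lemma picard_continuous n t : continuous (picard_y n) t /\ continuous (picard_z n) t.
Proof.
  revert t; induction n as [|n IH]; intros t.
  - split; apply continuous_const.
  - destruct (picard_derive_of_continuous n IH t) as [Hy Hz].
    split; eapply (ex_derive_continuous (K := R_AbsRing) (V := R_NormedModule)); eexists;
      [exact Hy | exact Hz].
Qed.

Lemma picard_derive n t :
  is_derive (picard_y (S n)) t (picard_z n t) /\
  is_derive (picard_z (S n)) t (q t * picard_y n t).
Proof. apply picard_derive_of_continuous, picard_continuous. Qed.

Lemma picard_at_0 n : picard_y (S n) 0 = c0 /\ picard_z (S n) 0 = c1.
Proof. unfold picard_y, picard_z; simpl; rewrite !RInt_point; split; apply Rplus_0_r. Qed.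

Lemma picard_1 t : picard_y 1 t = c0 /\ picard_z 1 t = c1.
Proof.
  unfold picard_y, picard_z; simpl.
  rewrite (RInt_ext (fun s => q s * 0) (fun _ => 0)) by (intros x _; apply Rmult_0_r).
  rewrite !RInt_const; unfold scal; simpl; unfold mult; simpl; split; ring.
Qed.

Section Increments.

Variables T M : R.
Hypothesis M_ge0 : 0 <= M.
Hypothesis q_bound : forall s, Rabs s <= T -> Rabs (q s) <= M.

Definition picard_increment n t :=
  Rabs (picard_y (S n) t - picard_y n t) + Rabs (picard_z (S n) t - picard_z n t).

Definition picard_coef n := (Rabs c0 + Rabs c1) * (1 + M) ^ n / INR (Factorial.fact n).

Lemma picard_coef_nonneg n : 0 <= picard_coef n.
Proof.
  unfold picard_coef. apply Rmult_le_pos; [apply Rmult_le_pos | ].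
  - pose proof (Rabs_pos c0); pose proof (Rabs_pos c1); lra.
  - apply pow_le; lra.
  - apply Rlt_le, Rinv_0_lt_compat, lt_0_INR, Factorial.lt_O_fact.
Qed.

Lemma picard_increment_bound n t :
  Rabs t <= T -> picard_increment n t <= picard_coef n * Rabs t ^ n.
Proof.
  revert t; induction n as [|n IH]; intros t Ht.
  - unfold picard_increment, picard_coef. destruct (picard_1 t) as [-> ->].
    unfold picard_y, picard_z; simpl. rewrite !Rminus_0_r. lra.
  - assert (Hy : Rabs (picard_y (S (S n)) t - picard_y (S n) t)
                 <= picard_coef n * Rabs t ^ S n / INR (S n)).
    { apply (abs_le_pow_of_derive (fun s => picard_y (S (S n)) s - picard_y (S n) s)
        (fun s => picard_z (S n) s - picard_z n s)).
      - destruct (picard_at_0 (S n)) as [-> _]; destruct (picard_at_0 n) as [-> _]; ring.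
      - intros s; apply (is_derive_minus (picard_y (S (S n)))); apply picard_derive.
      - intros s Hs. specialize (IH s ltac:(lra)). unfold picard_increment in IH.
        pose proof (Rabs_pos (picard_y (S n) s - picard_y n s)). lra. }
    assert (Hz : Rabs (picard_z (S (S n)) t - picard_z (S n) t)
                 <= M * picard_coef n * Rabs t ^ S n / INR (S n)).
    { apply (abs_le_pow_of_derive (fun s => picard_z (S (S n)) s - picard_z (S n) s)
        (fun s => q s * (picard_y (S n) s - picard_y n s))).
      - destruct (picard_at_0 (S n)) as [_ ->]; destruct (picard_at_0 n) as [_ ->]; ring.
      - intros s. replace (q s * (picard_y (S n) s - picard_y n s))
          with (q s * picard_y (S n) s - q s * picard_y n s) by ring.
        apply (is_derive_minus (picard_z (S (S n)))); apply picard_derive.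
      - intros s Hs. specialize (IH s ltac:(lra)). unfold picard_increment in IH.
        pose proof (Rabs_pos (picard_z (S n) s - picard_z n s)).
        rewrite Rabs_mult, Rmult_assoc.
        apply Rmult_le_compat; [apply Rabs_pos | apply Rabs_pos | apply q_bound; lra | lra]. }
    unfold picard_increment.
    replace (picard_coef (S n) * Rabs t ^ S n)
      with (picard_coef n * Rabs t ^ S n / INR (S n)
            + M * picard_coef n * Rabs t ^ S n / INR (S n)).
    + lra.
    + unfold picard_coef. rewrite fact_simpl, mult_INR. simpl pow.
      field; split; apply not_0_INR; [apply Factorial.fact_neq_0 | lia].
Qed.

End Increments.

Lemma picard_summable_increments (r : posreal) : exists a, ex_series a /\
  forall n y, Boule 0 r y -> picard_increment n y <= a n.
Proof.
  destruct (bounded_on_segment q (- r) r q_cont) as [M [HM HqM]].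
  exists (fun n => (Rabs c0 + Rabs c1) * (((1 + M) * r) ^ n / INR (Factorial.fact n))).
  split.
  - apply (ex_series_scal_l (V := R_NormedModule)). exists (exp ((1 + M) * r)).
    apply (is_series_ext _ _ _ (fun n => f_equal2 Rmult (pow_n_pow _ n) eq_refl)).
    apply is_exp_Reals.
  - intros n y Hy. unfold Boule in Hy; rewrite Rminus_0_r in Hy.
    eapply Rle_trans.
    + apply (picard_increment_bound r M); [| lra].
      intros s Hs; apply HqM, Rabs_le_between, Hs.
    + replace ((Rabs c0 + Rabs c1) * (((1 + M) * r) ^ n / INR (Factorial.fact n)))
        with (picard_coef M n * r ^ n)
        by (unfold picard_coef; rewrite Rpow_mult_distr; field; apply INR_fact_neq_0).
      apply Rmult_le_compat_l; [apply picard_coef_nonneg, HM |].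
      apply pow_incr; split; [apply Rabs_pos | lra].
Qed.

Lemma CVU_picard_y r : CVU picard_y (increments_limit picard_y) 0 r.
Proof.
  revert r; apply CVU_of_summable_increments; intros r.
  destruct (picard_summable_increments r) as [a [Ha Hb]]; exists a; split; [exact Ha |].
  intros n t Ht; specialize (Hb n t Ht); unfold picard_increment in Hb.
  pose proof (Rabs_pos (picard_z (S n) t - picard_z n t)); lra.
Qed.

Lemma CVU_picard_z r : CVU picard_z (increments_limit picard_z) 0 r.
Proof.
  revert r; apply CVU_of_summable_increments; intros r.
  destruct (picard_summable_increments r) as [a [Ha Hb]]; exists a; split; [exact Ha |].
  intros n t Ht; specialize (Hb n t Ht); unfold picard_increment in Hb.
  pose proof (Rabs_pos (picard_y (S n) t - picard_y n t)); lra.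
Qed.

Theorem linear_ode_exists : exists y z : R -> R,
  (forall t, is_derive y t (z t)) /\ (forall t, is_derive z t (q t * y t)) /\
  y 0 = c0 /\ z 0 = c1.
Proof.
  set (y := increments_limit picard_y); set (z := increments_limit picard_z).
  assert (Hr : forall t, 0 < Rabs t + 1) by (intros t; pose proof (Rabs_pos t); lra).
  set (ball t := mkposreal _ (Hr t)).
  assert (Hball : forall t, Boule 0 (ball t) t)
    by (intros t; unfold Boule; simpl; rewrite Rminus_0_r; lra).
  exists y, z. split; [| split; [| split]].
  - intros t. apply is_derive_Reals.
    apply (CVU_derivable (fun n => picard_y (S n)) picard_z y z 0 (ball t));
      [apply CVU_picard_z | | | apply Hball].
    + intros x Hx; apply (CVU_cv (fun n => picard_y (S n)) y 0 (ball t));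
        [apply (CVU_shift picard_y), CVU_picard_y | exact Hx].
    + intros n x _; apply is_derive_Reals, picard_derive.
  - intros t. apply is_derive_Reals.
    destruct (bounded_on_segment q (- (Rabs t + 1)) (Rabs t + 1) q_cont) as [M [_ HM]].
    apply (CVU_derivable (fun n => picard_z (S n)) (fun n x => q x * picard_y n x)
      z (fun x => q x * y x) 0 (ball t)); [| | | apply Hball].
    + apply (CVU_mult_bounded _ _ _ M); [apply CVU_picard_y |].
      intros x Hx; apply HM, Rabs_le_between.
      unfold Boule in Hx; simpl in Hx; rewrite Rminus_0_r in Hx; lra.
    + intros x Hx; apply (CVU_cv (fun n => picard_z (S n)) z 0 (ball t));
        [apply (CVU_shift picard_z), CVU_picard_z | exact Hx].
    + intros n x _; apply is_derive_Reals, picard_derive.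
  - apply (CVU_lim_eventually_const picard_y y (ball 0)); [apply CVU_picard_y | apply Hball |].
    intros n; apply picard_at_0.
  - apply (CVU_lim_eventually_const picard_z z (ball 0)); [apply CVU_picard_z | apply Hball |].
    intros n; apply picard_at_0.
Qed.

End Picard.

(** * Partial derivatives and the invariance criterion *)

Lemma ex_derive_pd_t f l t x : smooth2 f -> ex_derive (fun s => pd l f s x) t.
Proof. intros Hf; exact (proj1 (proj1 (Hf l) t x)). Qed.

Lemma ex_derive_pd_x f l t x : smooth2 f -> ex_derive (fun y => pd l f t y) x.
Proof. intros Hf; exact (proj2 (proj1 (Hf l) t x)). Qed.

(** [pd_word] and [pd_base] read [dx (dt U)] as [pd (false :: true :: nil) U]. *)
Ltac pd_word F :=
  lazymatch F with
  | dt ?G => let l := pd_word G in constr:(true :: l)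
  | dx ?G => let l := pd_word G in constr:(false :: l)
  | _ => constr:(@nil bool)
  end.

Ltac pd_base F :=
  lazymatch F with
  | dt ?G => pd_base G
  | dx ?G => pd_base G
  | _ => F
  end.

Ltac ex_derive_partial :=
  match goal with
  | |- ex_derive (fun s => ?F s ?y) ?t =>
      let l := pd_word F in let U := pd_base F in
      exact (ex_derive_pd_t U l t y ltac:(assumption))
  | |- ex_derive (fun z => ?F ?t z) ?y =>
      let l := pd_word F in let U := pd_base F in
      exact (ex_derive_pd_x U l t y ltac:(assumption))
  end.

(** Normalizes the output of [auto_derive] (eta-expanded functions, equality typed in
    [R_AbsRing]) so that [ring] applies. *)
Ltac derive_ring :=
  repeat match goal with |- context [fun x0 : R => ?f x0] => change (fun x0 : R => f x0) with f end;
  match goal with |- @eq _ ?a ?b => change (@eq R a b) end;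
  ring.

(** Common shape of both characteristics of [G(chi) + sigma M + rho I]. *)
Definition char_form (chi rho alpha beta : R -> R) (U W : R -> R -> R) t x :=
  rho t * U t x - (alpha t * x + beta t) * W t x - chi t * dx U t x.

Section CharForm.
Variables chi rho alpha beta : R -> R.
Variables U W : R -> R -> R.
Hypothesis U_smooth : smooth2 U.
Hypothesis W_smooth : smooth2 W.

Lemma dt_char_form t x :
  (forall s, ex_derive chi s) -> (forall s, ex_derive rho s) ->
  (forall s, ex_derive alpha s) -> (forall s, ex_derive beta s) ->
  dt (char_form chi rho alpha beta U W) t x =
  Derive rho t * U t x + rho t * dt U t x - (Derive alpha t * x + Derive beta t) * W t x
  - (alpha t * x + beta t) * dt W t x - Derive chi t * dx U t x - chi t * dt (dx U) t x.
Proof.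
  intros Hchi Hrho Halpha Hbeta. unfold dt at 1, char_form.
  apply is_derive_unique. auto_derive.
  - repeat split; auto; ex_derive_partial.
  - unfold dt. derive_ring.
Qed.

Lemma dx_char_form t x :
  dx (char_form chi rho alpha beta U W) t x =
  rho t * dx U t x - alpha t * W t x - (alpha t * x + beta t) * dx W t x
  - chi t * dx (dx U) t x.
Proof.
  unfold dx at 1, char_form. apply is_derive_unique. auto_derive.
  - repeat split; ex_derive_partial.
  - unfold dx. derive_ring.
Qed.

Lemma dxx_char_form t x :
  dx (dx (char_form chi rho alpha beta U W)) t x =
  rho t * dx (dx U) t x - 2 * alpha t * dx W t x - (alpha t * x + beta t) * dx (dx W) t x
  - chi t * dx (dx (dx U)) t x.
Proof.
  unfold dx at 1. rewrite (Derive_ext _ (fun y => rho t * dx U t y - alpha t * W t y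
    - (alpha t * y + beta t) * dx W t y - chi t * dx (dx U) t y)) by (intros; apply dx_char_form).
  apply is_derive_unique. auto_derive.
  - repeat split; ex_derive_partial.
  - unfold dx. derive_ring.
Qed.

End CharForm.

Lemma dt_dx_comm W t x : smooth2 W -> dt (dx W) t x = dx (dt W) t x.
Proof.
  intros HW. apply (Schwarz W t x).
  - exists (mkposreal 1 Rlt_0_1); intros u v _ _.
    repeat split; [apply (ex_derive_pd_t W nil) | apply (ex_derive_pd_x W nil)
                  | apply (ex_derive_pd_t W (false :: nil))
                  | apply (ex_derive_pd_x W (true :: nil))];
      exact HW.
  - apply continuity_2d_pt_filterlim, (proj2 (HW (true :: false :: nil))).
  - apply continuity_2d_pt_filterlim, (proj2 (HW (false :: true :: nil))).
Qed.

(** Names for the [let]-bound expressions of [is_Lie_symmetry]. *)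
Definition ev (f : R -> R -> R -> R -> R) (U W : R -> R -> R) t x := f t x (U t x) (W t x).

Definition char_u (Q : VF) (U W : R -> R -> R) t x :=
  ev (c_u Q) U W t x - ev (c_t Q) U W t x * dt U t x - ev (c_x Q) U W t x * dx U t x.
Definition char_v (Q : VF) (U W : R -> R -> R) t x :=
  ev (c_v Q) U W t x - ev (c_t Q) U W t x * dt W t x - ev (c_x Q) U W t x * dx W t x.

Definition schrodinger_re (V : R -> R -> C) (U W : R -> R -> R) t x :=
  - dt W t x + dx (dx U) t x + Re (V t x) * U t x - Im (V t x) * W t x.
Definition schrodinger_im (V : R -> R -> C) (U W : R -> R -> R) t x :=
  dt U t x + dx (dx W) t x + Re (V t x) * W t x + Im (V t x) * U t x.

Definition prolonged_re (V : R -> R -> C) (Q : VF) (U W : R -> R -> R) t x :=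
  ev (c_t Q) U W t x
    * (dt (fun t x => Re (V t x)) t x * U t x - dt (fun t x => Im (V t x)) t x * W t x)
  + ev (c_x Q) U W t x
    * (dx (fun t x => Re (V t x)) t x * U t x - dx (fun t x => Im (V t x)) t x * W t x)
  + Re (V t x) * ev (c_u Q) U W t x - Im (V t x) * ev (c_v Q) U W t x
  - (dt (char_v Q U W) t x + ev (c_t Q) U W t x * dt (dt W) t x
     + ev (c_x Q) U W t x * dx (dt W) t x)
  + (dx (dx (char_u Q U W)) t x + ev (c_t Q) U W t x * dx (dx (dt U)) t x
     + ev (c_x Q) U W t x * dx (dx (dx U)) t x).
Definition prolonged_im (V : R -> R -> C) (Q : VF) (U W : R -> R -> R) t x :=
  ev (c_t Q) U W t x
    * (dt (fun t x => Re (V t x)) t x * W t x + dt (fun t x => Im (V t x)) t x * U t x)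
  + ev (c_x Q) U W t x
    * (dx (fun t x => Re (V t x)) t x * W t x + dx (fun t x => Im (V t x)) t x * U t x)
  + Re (V t x) * ev (c_v Q) U W t x + Im (V t x) * ev (c_u Q) U W t x
  + (dt (char_u Q U W) t x + ev (c_t Q) U W t x * dt (dt U) t x
     + ev (c_x Q) U W t x * dx (dt U) t x)
  + (dx (dx (char_v Q U W)) t x + ev (c_t Q) U W t x * dx (dx (dt W)) t x
     + ev (c_x Q) U W t x * dx (dx (dx W)) t x).

Lemma is_Lie_symmetry_iff V Q : is_Lie_symmetry V Q <->
  forall U W, smooth2 U -> smooth2 W -> forall t x,
    schrodinger_re V U W t x = 0 -> schrodinger_im V U W t x = 0 ->
    prolonged_re V Q U W t x = 0 /\ prolonged_im V Q U W t x = 0.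
Proof. split; intros H; exact H. Qed.

Definition GMI (chi sigma rho : R -> R) : VF :=
  vf_add (Gop chi) (vf_add (sigM sigma) (rhoI rho)).

Section GMIComponents.
Variables chi sigma rho : R -> R.
Variables (t x u v : R).

Lemma c_t_GMI : c_t (GMI chi sigma rho) t x u v = 0.
Proof. unfold GMI, Gop, sigM, rhoI, vf_add, vf_fmul, d_x, Mvf, Ivf; simpl; ring. Qed.
Lemma c_x_GMI : c_x (GMI chi sigma rho) t x u v = chi t.
Proof. unfold GMI, Gop, sigM, rhoI, vf_add, vf_fmul, d_x, Mvf, Ivf; simpl; ring. Qed.
Lemma c_u_GMI :
  c_u (GMI chi sigma rho) t x u v = rho t * u - (/ 2 * Derive chi t * x + sigma t) * v.
Proof. unfold GMI, Gop, sigM, rhoI, vf_add, vf_fmul, d_x, Mvf, Ivf; simpl; ring. Qed.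
Lemma c_v_GMI :
  c_v (GMI chi sigma rho) t x u v = rho t * v + (/ 2 * Derive chi t * x + sigma t) * u.
Proof. unfold GMI, Gop, sigM, rhoI, vf_add, vf_fmul, d_x, Mvf, Ivf; simpl; ring. Qed.
End GMIComponents.

Lemma char_u_GMI chi sigma rho U W :
  char_u (GMI chi sigma rho) U W = char_form chi rho (fun t => / 2 * Derive chi t) sigma U W.
Proof.
  extensionality t; extensionality x. unfold char_u, char_form, ev.
  rewrite c_u_GMI, c_t_GMI, c_x_GMI; ring.
Qed.

Lemma char_v_GMI chi sigma rho U W :
  char_v (GMI chi sigma rho) U W
  = char_form chi rho (fun t => - / 2 * Derive chi t) (fun t => - sigma t) W U.
Proof.
  extensionality t; extensionality x. unfold char_v, char_form, ev.
  rewrite c_v_GMI, c_t_GMI, c_x_GMI; ring.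
Qed.

(** Real and imaginary parts of [chi V_x - (chi''/2 x + sigma' - i rho')]. *)
Definition det_re (V : R -> R -> C) (chi sigma : R -> R) t x :=
  chi t * dx (fun t x => Re (V t x)) t x - (/ 2 * Derive (Derive chi) t * x + Derive sigma t).
Definition det_im (V : R -> R -> C) (chi rho : R -> R) t x :=
  chi t * dx (fun t x => Im (V t x)) t x + Derive rho t.

Definition GMI_determining (V : R -> R -> C) (chi sigma rho : R -> R) : Prop :=
  forall t x, det_re V chi sigma t x = 0 /\ det_im V chi rho t x = 0.

Lemma prolonged_GMI V chi sigma rho U W t x :
  smooth1 chi -> smooth1 sigma -> smooth1 rho -> smooth2 U -> smooth2 W ->
  let theta := / 2 * Derive chi t * x + sigma t in
  prolonged_re V (GMI chi sigma rho) U W t x =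
    det_re V chi sigma t x * U t x - det_im V chi rho t x * W t x
    + rho t * schrodinger_re V U W t x - theta * schrodinger_im V U W t x /\
  prolonged_im V (GMI chi sigma rho) U W t x =
    det_re V chi sigma t x * W t x + det_im V chi rho t x * U t x
    + rho t * schrodinger_im V U W t x + theta * schrodinger_re V U W t x.
Proof.
  intros Hchi Hsigma Hrho HU HW theta.
  assert (Hd : forall f, smooth1 f -> forall s, ex_derive f s)
    by (intros f Hf s; apply smooth1_ex_derive, Hf).
  assert (Hdchi : forall c, smooth1 (fun s => c * Derive chi s))
    by (intros c; apply smooth1_scal, smooth1_Derive, Hchi).
  assert (Hdsigma : smooth1 (fun s => - sigma s))
    by (apply (smooth1_ext (fun s => -1 * sigma s)); [intros; ring | apply smooth1_scal, Hsigma]).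
  unfold prolonged_re, prolonged_im, ev.
  rewrite char_u_GMI, char_v_GMI, !c_t_GMI, !c_x_GMI, !c_u_GMI, !c_v_GMI.
  rewrite !dt_char_form, !dxx_char_form by auto.
  rewrite !Derive_scal, !Derive_opp, !dt_dx_comm by assumption.
  unfold det_re, det_im, schrodinger_re, schrodinger_im, theta. split; field.
Qed.

Lemma pd_affine_t c d l : exists c' d', forall s y, pd l (fun s _ => c + d * s) s y = c' + d' * s.
Proof.
  induction l as [|[|] l [c' [d' IH]]].
  - exists c, d; reflexivity.
  - exists d', 0; intros s y; simpl; unfold dt.
    rewrite (Derive_ext _ (fun s => c' + d' * s)) by (intros; apply IH).
    apply is_derive_unique; auto_derive; [trivial | ring].
  - exists 0, 0; intros s y; simpl; unfold dx.
    rewrite (Derive_ext _ (fun _ => c' + d' * s)) by (intros; apply IH).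
    rewrite Derive_const; ring.
Qed.

Lemma smooth2_affine_t c d : smooth2 (fun s _ => c + d * s).
Proof.
  intros l. destruct (pd_affine_t c d l) as [c' [d' H]]. split.
  - intros t x; split.
    + apply (ex_derive_ext (fun s => c' + d' * s));
        [intros; symmetry; apply H | auto_derive; trivial].
    + apply (ex_derive_ext (fun _ => c' + d' * t));
        [intros; symmetry; apply H | auto_derive; trivial].
  - intros t x. apply (continuous_ext (fun p : R * R => c' + d' * fst p));
      [intros p; symmetry; apply H |].
    apply (continuous_comp (fun p : R * R => fst p) (fun s => c' + d' * s)).
    + apply continuous_fst.
    + apply (ex_derive_continuous (K := R_AbsRing) (V := R_NormedModule)); auto_derive; trivial.
Qed.

Lemma dt_affine_t c d t x : dt (fun s _ => c + d * s) t x = d.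
Proof. unfold dt; apply is_derive_unique; auto_derive; [trivial | ring]. Qed.

Lemma dxx_affine_t c d t x : dx (dx (fun s _ => c + d * s)) t x = 0.
Proof.
  unfold dx at 1. rewrite (Derive_ext _ (fun _ => 0)); [apply Derive_const |].
  intros y; unfold dx; apply Derive_const.
Qed.

(** Necessity: at each point, test with a pair [(U, W)], affine in [t], that solves the
    equation at that point and equals [(1, 0)] there. *)
Lemma gV_GMI_iff V chi sigma rho : smooth1 chi -> smooth1 sigma -> smooth1 rho ->
  (gV V (GMI chi sigma rho) <-> GMI_determining V chi sigma rho).
Proof.
  intros Hchi Hsigma Hrho. unfold gV; rewrite is_Lie_symmetry_iff. split.
  - intros H t x. set (a := Re (V t x)); set (b := Im (V t x)).
    set (U := fun s (_ : R) => (1 + b * t) + (- b) * s).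
    set (W := fun s (_ : R) => (- a * t) + a * s).
    assert (HU : smooth2 U) by apply smooth2_affine_t.
    assert (HW : smooth2 W) by apply smooth2_affine_t.
    assert (Ere : schrodinger_re V U W t x = 0)
      by (unfold schrodinger_re, U, W; rewrite dt_affine_t, dxx_affine_t; fold a b; ring).
    assert (Eim : schrodinger_im V U W t x = 0)
      by (unfold schrodinger_im, U, W; rewrite dt_affine_t, dxx_affine_t; fold a b; ring).
    destruct (H U W HU HW t x Ere Eim) as [L1 L2].
    destruct (prolonged_GMI V chi sigma rho U W t x Hchi Hsigma Hrho HU HW) as [R1 R2].
    rewrite R1, Ere, Eim in L1. rewrite R2, Ere, Eim in L2.
    assert (U t x = 1) by (unfold U; ring). assert (W t x = 0) by (unfold W; ring).
    split; nra.
  - intros H U W HU HW t x Ere Eim.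
    destruct (prolonged_GMI V chi sigma rho U W t x Hchi Hsigma Hrho HU HW) as [R1 R2].
    destruct (H t x) as [D1 D2]. rewrite R1, R2, D1, D2, Ere, Eim. split; ring.
Qed.

(** * Determining equations and the dimension count *)

Lemma Derive_n_pd_t f l x n t :
  Derive_n (fun s => pd l f s x) n t = pd (repeat true n ++ l) f t x.
Proof.
  revert t; induction n as [|n IH]; intros t; [reflexivity |].
  simpl; unfold dt; apply Derive_ext; intros s; apply IH.
Qed.

Lemma smooth1_pd_t f l x : smooth2 f -> smooth1 (fun s => pd l f s x).
Proof.
  intros Hf n t. apply (ex_derive_ext (fun s => pd (repeat true n ++ l) f s x)).
  - intros s; symmetry; apply Derive_n_pd_t.
  - apply ex_derive_pd_t, Hf.
Qed.

Definition ax (V : R -> R -> C) t x := dx (fun t x => Re (V t x)) t x.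
Definition bx (V : R -> R -> C) t x := dx (fun t x => Im (V t x)) t x.
Definition potential_q (V : R -> R -> C) t := 2 * (ax V t 1 - ax V t 0).

(** [V = gamma2 x^2 + gamma1 x + gamma0] with [gamma2] real-valued. *)
Definition quadratic_potential (V : R -> R -> C) : Prop :=
  forall t x, ax V t x = ax V t 0 + (ax V t 1 - ax V t 0) * x /\ bx V t x = bx V t 0.

Section Potential.
Variable V : R -> R -> C.
Hypothesis V_re : smooth2 (fun t x => Re (V t x)).
Hypothesis V_im : smooth2 (fun t x => Im (V t x)).

Lemma smooth1_ax x : smooth1 (fun t => ax V t x).
Proof. exact (smooth1_pd_t _ (false :: nil) x V_re). Qed.

Lemma smooth1_bx x : smooth1 (fun t => bx V t x).
Proof. exact (smooth1_pd_t _ (false :: nil) x V_im). Qed.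

Lemma smooth1_potential_q : smooth1 (potential_q V).
Proof. apply smooth1_scal, smooth1_minus; apply smooth1_ax. Qed.

End Potential.

Section Determining.
Variable V : R -> R -> C.
Variables chi sigma rho : R -> R.
Hypothesis det : GMI_determining V chi sigma rho.

Lemma determining_ode t : Derive (Derive chi) t = potential_q V t * chi t.
Proof.
  destruct (det t 1) as [H1 _]; destruct (det t 0) as [H0 _].
  unfold det_re in H0, H1; fold (ax V t 1) in H1; fold (ax V t 0) in H0.
  unfold potential_q; lra.
Qed.

Lemma determining_sigma t : Derive sigma t = chi t * ax V t 0.
Proof. destruct (det t 0) as [H _]; unfold det_re in H; unfold ax; lra. Qed.

Lemma determining_rho t : Derive rho t = - (chi t * bx V t 0).
Proof. destruct (det t 0) as [_ H]; unfold det_im in H; unfold bx; lra. Qed.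

Lemma determining_annihilates t x :
  chi t * (ax V t x - ax V t 0 - (ax V t 1 - ax V t 0) * x) = 0 /\
  chi t * (bx V t x - bx V t 0) = 0.
Proof.
  destruct (det t x) as [Hx Ix]; destruct (det t 0) as [H0 I0]; destruct (det t 1) as [H1 _].
  unfold det_re, det_im in *; fold (ax V t x) (ax V t 0) (ax V t 1) in *.
  fold (bx V t x) (bx V t 0) in *. split.
  - replace (chi t * (ax V t x - ax V t 0 - (ax V t 1 - ax V t 0) * x))
      with (chi t * ax V t x - chi t * ax V t 0 - (chi t * ax V t 1 - chi t * ax V t 0) * x)
      by ring.
    replace (chi t * ax V t x) with (/ 2 * Derive (Derive chi) t * x + Derive sigma t) by lra.
    replace (chi t * ax V t 1) with (/ 2 * Derive (Derive chi) t * 1 + Derive sigma t) by lra.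
    replace (chi t * ax V t 0) with (/ 2 * Derive (Derive chi) t * 0 + Derive sigma t) by lra.
    ring.
  - lra.
Qed.

End Determining.

Lemma determining_of_quadratic V chi sigma rho : quadratic_potential V ->
  (forall t, Derive (Derive chi) t = potential_q V t * chi t) ->
  (forall t, Derive sigma t = chi t * ax V t 0) ->
  (forall t, Derive rho t = - (chi t * bx V t 0)) ->
  GMI_determining V chi sigma rho.
Proof.
  intros HV Hchi Hsigma Hrho t x. destruct (HV t x) as [Ha Hb].
  unfold det_re, det_im; fold (ax V t x) (bx V t x).
  rewrite Hchi, Hsigma, Hrho, Ha, Hb; unfold potential_q; split; field.
Qed.

Lemma GMI_determining_const V c1 c2 : GMI_determining V (fun _ => 0) (fun _ => c1) (fun _ => c2).
Proof.
  intros t x; unfold det_re, det_im.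
  rewrite (Derive_ext (Derive (fun _ => 0)) (fun _ => 0)) by (intros; apply Derive_const).
  rewrite !Derive_const; split; ring.
Qed.

Lemma smooth1_continuity_pt f t : smooth1 f -> continuity_pt f t.
Proof. intros Hf; apply continuity_pt_filterlim, smooth1_continuous, Hf. Qed.

Lemma vanishing_of_mult_zero (chi g : R -> R) t1 :
  continuity_pt g t1 -> g t1 <> 0 -> (forall t, chi t * g t = 0) ->
  chi t1 = 0 /\ Derive chi t1 = 0.
Proof.
  intros Hg Hg1 H. destruct (continuous_neq_0 g t1 Hg Hg1) as [eps Heps].
  assert (Hloc : forall y, Rabs (y - t1) < eps -> chi y = 0).
  { intros y Hy. specialize (Heps (y - t1) Hy). replace (t1 + (y - t1)) with y in Heps by ring.
    destruct (Rmult_integral _ _ (H y)); [assumption | contradiction]. }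
  split.
  - apply Hloc; rewrite Rminus_diag, Rabs_R0; apply cond_pos.
  - apply is_derive_unique, (is_derive_ext_loc (fun _ => 0)).
    + exists eps; intros y Hy; symmetry; apply Hloc, Hy.
    + apply (is_derive_const (K := R_AbsRing) (V := R_NormedModule)).
Qed.

Lemma linear_ode_of_determining V chi sigma rho : smooth1 chi ->
  GMI_determining V chi sigma rho ->
  (forall t, is_derive chi t (Derive chi t)) /\
  (forall t, is_derive (Derive chi) t (potential_q V t * chi t)).
Proof.
  intros Hchi Hdet; split; intros t.
  - apply Derive_correct, smooth1_ex_derive, Hchi.
  - rewrite <- (determining_ode V chi sigma rho Hdet t).
    apply Derive_correct, smooth1_ex_derive, smooth1_Derive, Hchi.
Qed.

(** If [V] is not quadratic, [chi] vanishes to first order at some point, hence everywhere. *)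
Lemma determining_chi_zero V chi sigma rho :
  smooth2 (fun t x => Re (V t x)) -> smooth2 (fun t x => Im (V t x)) ->
  ~ quadratic_potential V -> smooth1 chi -> GMI_determining V chi sigma rho ->
  forall t, chi t = 0.
Proof.
  intros HVre HVim HV Hchi Hdet.
  assert (Hbad : exists t1 x1,
    ax V t1 x1 - ax V t1 0 - (ax V t1 1 - ax V t1 0) * x1 <> 0 \/ bx V t1 x1 - bx V t1 0 <> 0).
  { apply NNPP; intros Hn; apply HV; intros t x.
    split; apply NNPP; intros Hne; apply Hn; exists t, x; [left | right]; lra. }
  destruct Hbad as [t1 [x1 Hbad]].
  assert (H01 : chi t1 = 0 /\ Derive chi t1 = 0).
  { destruct Hbad as [Hbad | Hbad].
    - apply (vanishing_of_mult_zero chi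
        (fun t => ax V t x1 - ax V t 0 - (ax V t 1 - ax V t 0) * x1) t1); [| exact Hbad |].
      + apply smooth1_continuity_pt.
        apply smooth1_minus; [apply smooth1_minus | apply smooth1_mult];
          auto using smooth1_ax, smooth1_minus, smooth1_const.
      + intros t; apply (determining_annihilates V chi sigma rho Hdet t x1).
    - apply (vanishing_of_mult_zero chi (fun t => bx V t x1 - bx V t 0) t1); [| exact Hbad |].
      + apply smooth1_continuity_pt.
        apply smooth1_minus; apply smooth1_bx; exact HVim.
      + intros t; apply (determining_annihilates V chi sigma rho Hdet t x1). }
  destruct (linear_ode_of_determining V chi sigma rho Hchi Hdet) as [D1 D2].
  apply (linear_ode_unique (potential_q V) chi (Derive chi) t1); try apply H01; auto.
  intros t; apply smooth1_continuous, smooth1_potential_q, HVre.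
Qed.

Definition sigma_of (V : R -> R -> C) (y : R -> R) t := RInt (fun s => y s * ax V s 0) 0 t.
Definition rho_of (V : R -> R -> C) (y : R -> R) t := RInt (fun s => - (y s * bx V s 0)) 0 t.

Section Primitives.
Variable V : R -> R -> C.
Hypothesis V_re : smooth2 (fun t x => Re (V t x)).
Hypothesis V_im : smooth2 (fun t x => Im (V t x)).
Variable y : R -> R.
Hypothesis y_smooth : smooth1 y.

Let integrand_sigma_smooth : smooth1 (fun s => y s * ax V s 0).
Proof. apply smooth1_mult; [exact y_smooth | apply smooth1_ax, V_re]. Qed.

Let integrand_rho_smooth : smooth1 (fun s => - (y s * bx V s 0)).
Proof.
  apply (smooth1_ext (fun s => -1 * (y s * bx V s 0))); [intros; ring |].
  apply smooth1_scal, smooth1_mult; [exact y_smooth | apply smooth1_bx, V_im].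
Qed.

Lemma smooth1_sigma_of : smooth1 (sigma_of V y).
Proof. apply smooth1_RInt, integrand_sigma_smooth. Qed.

Lemma smooth1_rho_of : smooth1 (rho_of V y).
Proof. apply smooth1_RInt, integrand_rho_smooth. Qed.

Lemma is_derive_sigma_of t : is_derive (sigma_of V y) t (y t * ax V t 0).
Proof.
  apply (is_derive_RInt_continuous (fun s => y s * ax V s 0)).
  intros s; apply smooth1_continuous, integrand_sigma_smooth.
Qed.

Lemma is_derive_rho_of t : is_derive (rho_of V y) t (- (y t * bx V t 0)).
Proof.
  apply (is_derive_RInt_continuous (fun s => - (y s * bx V s 0))).
  intros s; apply smooth1_continuous, integrand_rho_smooth.
Qed.

End Primitives.

Lemma sigma_of_0 V y : sigma_of V y 0 = 0.
Proof. exact (RInt_point (V := R_CompleteNormedModule) 0 _). Qed.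

Lemma rho_of_0 V y : rho_of V y 0 = 0.
Proof. exact (RInt_point (V := R_CompleteNormedModule) 0 _). Qed.

Lemma vf_ext (P Q : VF) :
  (forall t x u v, c_t P t x u v = c_t Q t x u v) ->
  (forall t x u v, c_x P t x u v = c_x Q t x u v) ->
  (forall t x u v, c_u P t x u v = c_u Q t x u v) ->
  (forall t x u v, c_v P t x u v = c_v Q t x u v) -> P = Q.
Proof.
  destruct P, Q; simpl; intros Ht Hx Hu Hv.
  f_equal; repeat (apply functional_extensionality; intros); auto.
Qed.

Lemma GMI_ext chi sigma rho chi' sigma' rho' :
  (forall t, chi t = chi' t) -> (forall t, sigma t = sigma' t) -> (forall t, rho t = rho' t) ->
  GMI chi sigma rho = GMI chi' sigma' rho'.
Proof.
  intros H1 H2 H3. apply functional_extensionality in H1, H2, H3. now subst.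
Qed.

Lemma vf0_GMI : vf0 = GMI (fun _ => 0) (fun _ => 0) (fun _ => 0).
Proof.
  apply vf_ext; intros t x u v;
    rewrite ?c_t_GMI, ?c_x_GMI, ?c_u_GMI, ?c_v_GMI, ?Derive_const; simpl; ring.
Qed.

Lemma GMI_add chi sigma rho chi' sigma' rho' :
  (forall t, ex_derive chi t) -> (forall t, ex_derive chi' t) ->
  vf_add (GMI chi sigma rho) (GMI chi' sigma' rho')
  = GMI (fun t => chi t + chi' t) (fun t => sigma t + sigma' t) (fun t => rho t + rho' t).
Proof.
  intros H H'. apply vf_ext; intros t x u v; unfold vf_add; simpl;
    rewrite ?c_t_GMI, ?c_x_GMI, ?c_u_GMI, ?c_v_GMI, ?Derive_plus by auto; ring.
Qed.

Lemma GMI_scal k chi sigma rho :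
  vf_scal k (GMI chi sigma rho)
  = GMI (fun t => k * chi t) (fun t => k * sigma t) (fun t => k * rho t).
Proof.
  apply vf_ext; intros t x u v; unfold vf_scal, vf_fmul; simpl;
    rewrite ?c_t_GMI, ?c_x_GMI, ?c_u_GMI, ?c_v_GMI, ?Derive_scal; ring.
Qed.

Lemma GMI_eq_vf0 chi sigma rho : GMI chi sigma rho = vf0 ->
  forall t, chi t = 0 /\ sigma t = 0 /\ rho t = 0.
Proof.
  intros H t.
  assert (Hx := f_equal (fun Q => c_x Q t 0 0 0) H).
  assert (Hu1 := f_equal (fun Q => c_u Q t 0 1 0) H).
  assert (Hu2 := f_equal (fun Q => c_u Q t 0 0 1) H).
  cbv beta in Hx, Hu1, Hu2. rewrite c_x_GMI in Hx. rewrite c_u_GMI in Hu1, Hu2.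
  simpl in Hx, Hu1, Hu2.
  repeat split; lra.
Qed.

Fixpoint lincomb_fun (c : nat -> R) (f : nat -> R -> R) (n : nat) (t : R) : R :=
  match n with
  | O => 0
  | S n => lincomb_fun c f n t + c n * f n t
  end.

Lemma is_derive_lincomb_fun c f df n t : (forall i s, is_derive (f i) s (df i s)) ->
  is_derive (lincomb_fun c f n) t (lincomb_fun c df n t).
Proof.
  intros Hf; induction n as [|n IH]; simpl.
  - apply (is_derive_const (K := R_AbsRing) (V := R_NormedModule)).
  - apply (is_derive_plus (lincomb_fun c f n)); [exact IH | apply is_derive_scal, Hf].
Qed.

Lemma lincomb_GMI c chis sigmas rhos n : (forall i t, ex_derive (chis i) t) ->
  lincomb c (fun i => GMI (chis i) (sigmas i) (rhos i)) n
  = GMI (lincomb_fun c chis n) (lincomb_fun c sigmas n) (lincomb_fun c rhos n).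
Proof.
  intros Hd; induction n as [|n IH]; [apply vf0_GMI |].
  simpl; rewrite IH, GMI_scal, GMI_add; [reflexivity | |].
  - intros t; eexists; apply is_derive_lincomb_fun; intros i s; apply Derive_correct, Hd.
  - intros t; apply ex_derive_scal, Hd.
Qed.

Definition GMI_space (V : R -> R -> C) (Q : VF) : Prop := gV_ess V Q /\ in_GMI_span Q.

Lemma Dop_0_add Q : vf_add (Dop (fun _ => 0)) Q = Q.
Proof.
  assert (E2 : forall t, Derive_n (fun _ : R => 0) 2 t = 0) by (intros; apply (Derive_n_const 1)).
  apply vf_ext; intros t x u v; unfold Dop, vf_add, vf_fmul, d_t, d_x, Mvf; cbn [c_t c_x c_u c_v];
    rewrite ?Derive_const, ?E2; ring.
Qed.

Lemma GMI_space_iff V Q : GMI_space V Q <->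
  exists chi sigma rho, smooth1 chi /\ smooth1 sigma /\ smooth1 rho /\
    Q = GMI chi sigma rho /\ GMI_determining V chi sigma rho.
Proof.
  split.
  - intros [[HgV _] [chi [sigma [rho [Hchi [Hsigma [Hrho ->]]]]]]].
    exists chi, sigma, rho; do 4 (split; [auto |]).
    apply (gV_GMI_iff V chi sigma rho); auto.
  - intros [chi [sigma [rho [Hchi [Hsigma [Hrho [-> Hdet]]]]]]].
    split; [split |].
    + apply gV_GMI_iff; auto.
    + exists (fun _ => 0), chi, sigma, rho; do 4 (split; [auto using smooth1_const |]).
      symmetry; apply Dop_0_add.
    + exists chi, sigma, rho; auto.
Qed.

Lemma lincomb_fun_shift2 c f n t :
  lincomb_fun c f (S (S n)) t
  = c 0%nat * f 0%nat t + c 1%nat * f 1%nat t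
    + lincomb_fun (fun j => c (S (S j))) (fun j => f (S (S j))) n t.
Proof. induction n as [|n IH]; simpl in *; [| rewrite IH]; ring. Qed.

Lemma lincomb_fun_mult_r c f g n t :
  lincomb_fun c (fun j s => f j s * g s) n t = lincomb_fun c f n t * g t.
Proof. induction n as [|n IH]; simpl; [| rewrite IH]; ring. Qed.

Lemma lincomb_fun_vanishing c f n t : (forall j, f j t = 0) -> lincomb_fun c f n t = 0.
Proof. intros Hf; induction n as [|n IH]; simpl; [| rewrite IH, Hf]; ring. Qed.

Lemma primitive_decomposition (f : R -> R) (F dF : nat -> R -> R) c k :
  (forall j s, is_derive (F j) s (dF j s)) -> (forall j, F j 0 = 0) ->
  (forall s, is_derive f s (lincomb_fun c dF k s)) ->
  forall t, f t = f 0 + lincomb_fun c F k t.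
Proof.
  intros HF HF0 Hf t.
  assert (H : forall s, f s - lincomb_fun c F k s = f 0 - lincomb_fun c F k 0).
  { apply (const_of_derive_zero (fun s => f s - lincomb_fun c F k s)); intros s.
    replace 0 with (lincomb_fun c dF k s - lincomb_fun c dF k s) by ring.
    apply (is_derive_minus f); [apply Hf | apply is_derive_lincomb_fun, HF]. }
  specialize (H t). rewrite (lincomb_fun_vanishing c F k 0 HF0) in H. lra.
Qed.

(** The space is spanned by [M], [I] and the fields [G(y) + sigma_y M + rho_y I] built on
    a basis [ys 0, ..., ys (k-1)] of the admissible [chi]. *)
Section Basis.
Variable V : R -> R -> C.
Hypothesis V_re : smooth2 (fun t x => Re (V t x)).
Hypothesis V_im : smooth2 (fun t x => Im (V t x)).
Variable k : nat.
Variable ys : nat -> R -> R.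
Hypothesis ys_smooth : forall j, smooth1 (ys j).
Hypothesis ys_determining :
  forall j, (j < k)%nat -> GMI_determining V (ys j) (sigma_of V (ys j)) (rho_of V (ys j)).
Hypothesis ys_independent :
  forall c, (forall t, lincomb_fun c ys k t = 0) -> forall j, (j < k)%nat -> c j = 0.
Hypothesis ys_span : forall chi sigma rho, smooth1 chi -> GMI_determining V chi sigma rho ->
  exists c, forall t, chi t = lincomb_fun c ys k t.

Definition basis_chi i := match i with S (S j) => ys j | _ => fun _ : R => 0 end.
Definition basis_sigma i :=
  match i with O => fun _ : R => 1 | 1%nat => fun _ => 0 | S (S j) => sigma_of V (ys j) end.
Definition basis_rho i :=
  match i with O => fun _ : R => 0 | 1%nat => fun _ => 1 | S (S j) => rho_of V (ys j) end.
Definition basis i := GMI (basis_chi i) (basis_sigma i) (basis_rho i).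

Let basis_chi_derivable i t : ex_derive (basis_chi i) t.
Proof.
  destruct i as [|[|j]]; [apply ex_derive_const | apply ex_derive_const |].
  apply smooth1_ex_derive, ys_smooth.
Qed.

Lemma basis_in_space i : (i < S (S k))%nat -> GMI_space V (basis i).
Proof.
  intros Hi; apply GMI_space_iff. destruct i as [|[|j]].
  - exists (fun _ => 0), (fun _ => 1), (fun _ => 0).
    do 4 (split; [auto using smooth1_const |]). apply GMI_determining_const.
  - exists (fun _ => 0), (fun _ => 0), (fun _ => 1).
    do 4 (split; [auto using smooth1_const |]). apply GMI_determining_const.
  - exists (ys j), (sigma_of V (ys j)), (rho_of V (ys j)).
    split; [apply ys_smooth |]. split; [apply smooth1_sigma_of; auto |].
    split; [apply smooth1_rho_of; auto |]. split; [reflexivity | apply ys_determining; lia].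
Qed.

(** The primitives [sigma_of], [rho_of] vanish at [0], so the coefficients of [M] and [I]
    can be read off there. *)
Lemma basis_independent c : lincomb c basis (S (S k)) = vf0 ->
  forall i, (i < S (S k))%nat -> c i = 0.
Proof.
  intros Hc. unfold basis in Hc; rewrite lincomb_GMI in Hc by exact basis_chi_derivable.
  assert (H0 := GMI_eq_vf0 _ _ _ Hc).
  assert (Hc' : forall j, (j < k)%nat -> c (S (S j)) = 0).
  { apply (ys_independent (fun j => c (S (S j)))); intros t; destruct (H0 t) as [H _].
    rewrite lincomb_fun_shift2 in H; simpl in H.
    change (fun j : nat => ys j) with ys in H; lra. }
  destruct (H0 0) as [_ [Hs Hr]]; rewrite lincomb_fun_shift2 in Hs, Hr; simpl in Hs, Hr.
  rewrite lincomb_fun_vanishing in Hs by (intros; apply sigma_of_0).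
  rewrite lincomb_fun_vanishing in Hr by (intros; apply rho_of_0).
  intros [|[|j]] Hj; [lra | lra | apply Hc'; lia].
Qed.

Lemma basis_spans Q : GMI_space V Q -> exists c, Q = lincomb c basis (S (S k)).
Proof.
  intros HQ. apply GMI_space_iff in HQ.
  destruct HQ as (chi & sigma & rho & Hchi & Hsigma & Hrho & -> & Hd).
  destruct (ys_span chi sigma rho Hchi Hd) as [c Hc].
  exists (fun i => match i with O => sigma 0 | 1%nat => rho 0 | S (S j) => c j end).
  unfold basis; rewrite lincomb_GMI by exact basis_chi_derivable.
  apply GMI_ext; intros t; rewrite lincomb_fun_shift2; simpl; change (fun j : nat => c j) with c.
  - rewrite Hc; change (fun j : nat => ys j) with ys; ring.
  - rewrite (primitive_decomposition sigma (fun j => sigma_of V (ys j))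
      (fun j s => ys j s * ax V s 0) c k) at 1; [ring | | |].
    + intros j s; apply is_derive_sigma_of; auto.
    + intros j; apply sigma_of_0.
    + intros s. rewrite lincomb_fun_mult_r, <- Hc, <- (determining_sigma V chi sigma rho Hd).
      apply Derive_correct, smooth1_ex_derive, Hsigma.
  - rewrite (primitive_decomposition rho (fun j => rho_of V (ys j))
      (fun j s => ys j s * - bx V s 0) c k) at 1; [ring | | |].
    + intros j s. replace (ys j s * - bx V s 0) with (- (ys j s * bx V s 0)) by ring.
      apply is_derive_rho_of; auto.
    + intros j; apply rho_of_0.
    + intros s. rewrite lincomb_fun_mult_r, <- Hc.
      replace (chi s * - bx V s 0) with (- (chi s * bx V s 0)) by ring.
      rewrite <- (determining_rho V chi sigma rho Hd).
      apply Derive_correct, smooth1_ex_derive, Hrho.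
Qed.

Lemma has_dim_GMI_space : has_dim (GMI_space V) (k + 2).
Proof.
  rewrite Nat.add_comm. exists basis.
  split; [exact basis_in_space | split; [exact basis_independent | exact basis_spans]].
Qed.

End Basis.

Lemma has_dim_not_quadratic V :
  smooth2 (fun t x => Re (V t x)) -> smooth2 (fun t x => Im (V t x)) ->
  ~ quadratic_potential V -> has_dim (GMI_space V) (0 + 2).
Proof.
  intros HVre HVim HV.
  apply (has_dim_GMI_space V HVre HVim 0 (fun _ _ => 0)); try (intros; lia).
  - intros j; apply smooth1_const.
  - intros chi sigma rho Hchi Hd. exists (fun _ => 0); intros t; simpl.
    apply (determining_chi_zero V chi sigma rho); auto.
Qed.

Definition pair_fun (f g : R -> R) (j : nat) : R -> R := match j with O => f | _ => g end.

Section FundamentalPair.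
Variable q : R -> R.
Hypothesis q_cont : forall t, continuous q t.
Variables y1 z1 y2 z2 : R -> R.
Hypothesis y1_ode : forall t, is_derive y1 t (z1 t) /\ is_derive z1 t (q t * y1 t).
Hypothesis y2_ode : forall t, is_derive y2 t (z2 t) /\ is_derive z2 t (q t * y2 t).
Hypothesis y1_0 : y1 0 = 1 /\ z1 0 = 0.
Hypothesis y2_0 : y2 0 = 0 /\ z2 0 = 1.

Let ys := pair_fun y1 y2.
Let zs := pair_fun z1 z2.

Let ys_derive j s : is_derive (ys j) s (zs j s).
Proof. destruct j; apply y1_ode || apply y2_ode. Qed.

Let zs_derive j s : is_derive (zs j) s (ys j s * q s).
Proof. rewrite Rmult_comm; destruct j; apply y1_ode || apply y2_ode. Qed.

Lemma fundamental_pair_independent c :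
  (forall t, lincomb_fun c ys 2 t = 0) -> forall j, (j < 2)%nat -> c j = 0.
Proof.
  intros Hc. assert (Hd : is_derive (fun _ => 0) 0 (lincomb_fun c zs 2 0)).
  { apply (is_derive_ext (lincomb_fun c ys 2)); [exact Hc |].
    apply is_derive_lincomb_fun, ys_derive. }
  apply is_derive_unique in Hd. rewrite Derive_const in Hd.
  specialize (Hc 0). unfold ys, zs, pair_fun in *; simpl in Hc, Hd.
  destruct y1_0 as [Y1 Z1], y2_0 as [Y2 Z2].
  rewrite Y1, Y2 in Hc; rewrite Z1, Z2 in Hd.
  intros [|[|j]] Hj; [lra | lra | lia].
Qed.

Lemma fundamental_pair_spans chi : smooth1 chi ->
  (forall t, Derive (Derive chi) t = q t * chi t) ->
  exists c, forall t, chi t = lincomb_fun c ys 2 t.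
Proof.
  intros Hchi Hode. set (c j := match j with O => chi 0 | _ => Derive chi 0 end).
  exists c. intros t. apply Rminus_diag_uniq.
  apply (linear_ode_unique q (fun t => chi t - lincomb_fun c ys 2 t)
    (fun t => Derive chi t - lincomb_fun c zs 2 t) 0 q_cont); [intros s .. | |].
  - apply (is_derive_minus chi); [apply Derive_correct, smooth1_ex_derive, Hchi |].
    apply is_derive_lincomb_fun, ys_derive.
  - replace (q s * (chi s - lincomb_fun c ys 2 s))
      with (Derive (Derive chi) s - lincomb_fun c ys 2 s * q s) by (rewrite Hode; ring).
    apply (is_derive_minus (Derive chi));
      [apply Derive_correct, smooth1_ex_derive, smooth1_Derive, Hchi |].
    rewrite <- lincomb_fun_mult_r. apply is_derive_lincomb_fun, zs_derive.
  - unfold ys, pair_fun, c; simpl. destruct y1_0 as [-> _], y2_0 as [-> _]; ring.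
  - unfold zs, pair_fun, c; simpl. destruct y1_0 as [_ ->], y2_0 as [_ ->]; ring.
Qed.

End FundamentalPair.

Lemma has_dim_quadratic V :
  smooth2 (fun t x => Re (V t x)) -> smooth2 (fun t x => Im (V t x)) ->
  quadratic_potential V -> has_dim (GMI_space V) (2 + 2).
Proof.
  intros HVre HVim HV. set (q := potential_q V).
  assert (Hq : smooth1 q) by (apply smooth1_potential_q, HVre).
  assert (Hqc : forall t, continuous q t) by (intros; apply smooth1_continuous, Hq).
  destruct (linear_ode_exists q Hqc 1 0) as (y1 & z1 & Dy1 & Dz1 & Y10 & Z10).
  destruct (linear_ode_exists q Hqc 0 1) as (y2 & z2 & Dy2 & Dz2 & Y20 & Z20).
  assert (Hys : forall j, smooth1 (pair_fun y1 y2 j))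
    by (intros [|j]; eapply smooth1_of_linear_ode; eauto).
  assert (Hode : forall j t, Derive (Derive (pair_fun y1 y2 j)) t = q t * pair_fun y1 y2 j t).
  { intros [|j] t; simpl.
    - rewrite (Derive_ext _ z1) by (intros; apply is_derive_unique, Dy1).
      apply is_derive_unique, Dz1.
    - rewrite (Derive_ext _ z2) by (intros; apply is_derive_unique, Dy2).
      apply is_derive_unique, Dz2. }
  apply (has_dim_GMI_space V HVre HVim 2 (pair_fun y1 y2)); auto.
  - intros j _. apply determining_of_quadratic; auto; intros t;
      apply is_derive_unique; [apply is_derive_sigma_of | apply is_derive_rho_of]; auto.
  - apply (fundamental_pair_independent q y1 z1 y2 z2); auto.
  - intros chi sigma rho Hchi Hd.
    apply (fundamental_pair_spans q Hqc y1 z1 y2 z2); auto.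
    apply (determining_ode V chi sigma rho Hd).
Qed.

Theorem lemma6 (V : R -> R -> C)
  (HVre : smooth2 (fun t x => Re (V t x)))
  (HVim : smooth2 (fun t x => Im (V t x))) :
  exists k2 : nat, (k2 = 0%nat \/ k2 = 2%nat) /\
    has_dim (fun Q => gV_ess V Q /\ in_GMI_span Q) (k2 + 2).
Proof.
  destruct (classic (quadratic_potential V)) as [HV | HV].
  - exists 2%nat; split; [right; reflexivity |]. exact (has_dim_quadratic V HVre HVim HV).
  - exists 0%nat; split; [left; reflexivity |]. exact (has_dim_not_quadratic V HVre HVim HV).
Qed.
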